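(* Consider the queueing system in the context under MaxWeight with a diagonal matrix $\Delta$ with positive diagonal entries, in overload ($\rho\notin\mathcal{P}$), and let $\eta=\lim_{t\to\infty}X(t)/t$. Then $$\langle\eta,\Delta\eta\rangle=\langle\rho,\Delta\eta\rangle-\max_{S\in\mathcal{S}}\langle S,\Delta\eta\rangle.$$
   Context: Model: $Q$ queues, finite set $\mathcal{S}=\{S_1,\dots,S_N\}\subset\mathbb{R}^Q_{\ge0}$, discrete time. Arrivals $A(t)$ with $0\le A_q(t)\le\bar A_q<\infty$ and $\rho_q=\lim_{t\to\infty}\frac1t\sum_{s=0}^{t-1}A_q(s)\in(0,\infty)$. Departures $D_q(t)=\min\{S_q(t),X_q(t)\}$, $X(t+1)=X(t)+A(t)-D(t)$, $X(0)=0$, with $S(t)\in\arg\max_{S\in\mathcal{S}}\langle S,\Delta X(t)\rangle$. Stability region $\mathcal{P}=\{r\in\mathbb{R}^Q_{\ge0}: r\le\sum_n\alpha_nS_n\text{ for some }\alpha_n\ge0,\sum_n\alpha_n=1\}$. (Under these assumptions $\lim_t X(t)/t$ exists.) *)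

From HB Require Import structures.
From mathcomp Require Import all_boot all_order all_algebra.
From mathcomp Require Import all_classical all_reals all_analysis.
Set Implicit Arguments. Unset Strict Implicit. Unset Printing Implicit Defensive.
Import Order.TTheory GRing.Theory Num.Theory.
Local Open Scope ring_scope.

(* Weighted inner product <u, Delta v> with Delta = diag(d). *)
Definition ipD (R : realType) (Q : nat) (d u v : 'I_Q -> R) : R :=
  \sum_(q < Q) u q * (d q * v q).

Definition in_stab_region (R : realType) (Q N : nat)
    (S : 'I_N -> 'I_Q -> R) (r : 'I_Q -> R) : Prop :=
  (forall q, 0 <= r q) /\
  exists alpha : 'I_N -> R, (forall n, 0 <= alpha n) /\
    \sum_(n < N) alpha n = 1 /\
    forall q, r q <= \sum_(n < N) alpha n * S n q.

Definition maxSD (R : realType) (Q N : nat) (S : 'I_N.+1 -> 'I_Q -> R)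
    (d v : 'I_Q -> R) : R :=
  \big[Num.max/ipD d (S ord0) v]_(n < N.+1) ipD d (S n) v.

(* Since X(t)/t -> eta, strict inequalities between the limits <S_n, Delta eta>
   are eventually strict for <S_n, Delta X(t)>, so MaxWeight eventually only
   picks schedules maximizing <S, Delta eta>; and every queue with eta_q > 0
   grows linearly, hence eventually exceeds every schedule and is fully served.
   So from some time on the Delta eta-weighted departures are exactly
   max_S <S, Delta eta>.  Cumulative departures are cumulative arrivals minus
   X(t), so their Cesaro mean tends to <rho - eta, Delta eta>, and the two
   limits coincide. *)

From HB Require Import structures.
From mathcomp Require Import all_boot all_order all_algebra.
From mathcomp Require Import all_classical all_reals all_analysis.
From mathcomp Require Import ring.
Import Order.TTheory GRing.Theory Num.Theory.
Local Open Scope ring_scope.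
Local Open Scope classical_set_scope.
Import numFieldNormedType.Exports.

Lemma cvg_mean {R : archiRealFieldType} {u : nat -> R} {l : R} :
  u @ \oo --> l -> (fun t : nat => (\sum_(s < t) u s) / t%:R) @ \oo --> l.
Proof.
move=> /cesaro ul; rewrite -cvg_shiftS; apply: cvg_trans ul; apply: near_eq_cvg.
by apply: nearW => t /=; rewrite /arithmetic_mean /= seriesEord mulrC.
Qed.

Lemma lim_ge0 {R : realType} (u : nat -> R) (l : R) :
  (forall t, 0 <= u t) -> u @ \oo --> l -> 0 <= l.
Proof.
move=> u_ge0 ul; rewrite -(cvg_lim _ ul) //.
by apply: limr_ge; [apply/cvg_ex; exists l | exact: nearW].
Qed.

Lemma near_ge_of_linear_growth {R : realType} {x : nat -> R} {e : R} (K : R) :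
  0 < e -> (fun t : nat => x t / t%:R) @ \oo --> e ->
  \forall t \near \oo, K <= x t.
Proof.
move=> e_gt0 xe; pose c := e / 2.
have c_gt0 : 0 < c by rewrite divr_gt0.
have c_lt_e : c < e by rewrite /c ltr_pdivrMr // ltr_pMr // ltr1n.
near=> t.
have xc : c < x t / t%:R by near: t; apply: (cvgr_gt _ xe).
have tK : K / c <= t%:R by near: t; apply: nbhs_infty_ger.
have t_gt0 : (0 < t)%N by near: t; apply: nbhs_infty_ge.
have t_neq0 : (t%:R : R) != 0 by rewrite pnatr_eq0 -lt0n.
rewrite -(divfK t_neq0 (x t)).
apply: le_trans (_ : c * t%:R <= _); last by rewrite ler_wpM2r // ltW.
by rewrite mulrC -ler_pdivrMr.
Unshelve. all: by end_near.
Qed.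

Lemma near_maximizer_of_cvg {R : realType} {I : finType}
    {f : I -> nat -> R} {F : I -> R} {pick : nat -> I} :
  (forall i, f i @ \oo --> F i) ->
  (forall t i, f i t <= f (pick t) t) ->
  \forall t \near \oo, forall i, F i <= F (pick t).
Proof.
move=> fF pick_max.
have [imax _ Fmax] := @arg_maxP _ _ _ (pick 0%N) xpredT F isT.
have strict : \forall t \near \oo, forall i, F i < F imax -> f i t < f imax t.
  apply: filter_forall => i; have [Fi|_] := ltP (F i) (F imax); last first.
    exact: nearW.
  have := cvgr_lt _ (cvgB (fF i) (fF imax)) 0.
  rewrite subr_lt0 => /(_ _ _ Fi); apply: filterS => t.
  by rewrite subr_lt0.
apply: filterS strict => t strict i; apply: le_trans (Fmax i isT) _.
by rewrite leNgt; apply/negP => /strict; rewrite ltNge pick_max.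
Qed.

Lemma queue_ge0 {R : realDomainType} {I : Type} {A s X : nat -> I -> R} :
  (forall q, X 0%N q = 0) -> (forall t q, 0 <= A t q) ->
  (forall t q, X t.+1 q = X t q + A t q - Num.min (s t q) (X t q)) ->
  forall t q, 0 <= X t q.
Proof.
move=> X0 A_ge0 Xrec; elim=> [|t IH] q; first by rewrite X0.
by rewrite Xrec subr_ge0 ge_min lerDl A_ge0 orbT.
Qed.

Lemma sum_departures {R : comPzRingType} {I : Type} {A D X : nat -> I -> R} :
  (forall q, X 0%N q = 0) ->
  (forall t q, X t.+1 q = X t q + A t q - D t q) ->
  forall t q, \sum_(s < t) D s q = \sum_(s < t) A s q - X t q.
Proof.
move=> X0 Xrec; elim=> [|t IH] q; first by rewrite !big_ord0 X0 subr0.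
by rewrite !big_ord_recr /= IH Xrec; ring.
Qed.

Section weighted_inner_product.
Variables (R : realType) (Q : nat) (d : 'I_Q -> R).

Lemma ipDBl (u u' v : 'I_Q -> R) :
  ipD d (fun q => u q - u' q) v = ipD d u v - ipD d u' v.
Proof. by rewrite /ipD -sumrB; apply: eq_bigr => q _; rewrite mulrBl. Qed.

Lemma ipD_divr (u v : 'I_Q -> R) (c : R) :
  ipD d u (fun q => v q / c) = ipD d u v / c.
Proof. by rewrite /ipD mulr_suml; apply: eq_bigr => q _; rewrite !mulrA. Qed.

Lemma ipD_suml_divr (I : Type) (r : seq I) (u : I -> 'I_Q -> R) (v : 'I_Q -> R)
    (c : R) :
  (\sum_(i <- r) ipD d (u i) v) / c =
  ipD d (fun q => (\sum_(i <- r) u i q) / c) v.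
Proof.
rewrite /ipD exchange_big mulr_suml; apply: eq_bigr => q _.
by rewrite -mulr_suml mulrAC.
Qed.

Lemma eq_ipD_support (u u' v : 'I_Q -> R) :
  (forall q, v q != 0 -> u q = u' q) -> ipD d u v = ipD d u' v.
Proof.
move=> uu'; apply: eq_bigr => q _.
by have [->|/uu'->] := eqVneq (v q) 0; rewrite ?mulr0.
Qed.

Lemma cvg_ipD (u v : nat -> 'I_Q -> R) (u0 v0 : 'I_Q -> R) :
  (forall q, (fun t => u t q) @ \oo --> u0 q) ->
  (forall q, (fun t => v t q) @ \oo --> v0 q) ->
  (fun t => ipD d (u t) (v t)) @ \oo --> ipD d u0 v0.
Proof.
move=> uu0 vv0; apply: cvg_big => [|q _]; first exact: add_continuous.
by apply: cvgM => //; apply: cvgM => //; exact: cvg_cst.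
Qed.

End weighted_inner_product.

Lemma maxSD_eq {R : realType} {Q N : nat} {S : 'I_N.+1 -> 'I_Q -> R}
    {d v : 'I_Q -> R} {m : 'I_N.+1} :
  (forall n, ipD d (S n) v <= ipD d (S m) v) -> maxSD S d v = ipD d (S m) v.
Proof.
move=> m_max; apply/le_anti; rewrite le_bigmax andbT.
by apply/bigmax_leP; split => // n _.
Qed.

Section maxweight.
Context {R : realType} {Q N : nat} (S : 'I_N.+1 -> 'I_Q -> R) {d : 'I_Q -> R}.
Context {X : nat -> 'I_Q -> R} (sched : nat -> 'I_N.+1) {eta : 'I_Q -> R}.
Hypothesis eta_cvg : forall q, (fun t : nat => X t q / t%:R) @ \oo --> eta q.

Lemma near_maxweight_maxSD :
  (forall t n, ipD d (S n) (X t) <= ipD d (S (sched t)) (X t)) ->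
  \forall t \near \oo, maxSD S d eta = ipD d (S (sched t)) eta.
Proof.
move=> maxweight.
have ipD_cvg n : (fun t => ipD d (S n) (fun q => X t q / t%:R)) @ \oo -->
    ipD d (S n) eta.
  by apply: cvg_ipD => q; [exact: cvg_cst | exact: eta_cvg].
have maxweight_mean t n : ipD d (S n) (fun q => X t q / t%:R) <=
    ipD d (S (sched t)) (fun q => X t q / t%:R).
  by rewrite !ipD_divr ler_wpM2r // invr_ge0.
apply: filterS (near_maximizer_of_cvg ipD_cvg maxweight_mean) => t.
exact: maxSD_eq.
Qed.

Lemma near_full_service :
  \forall t \near \oo, forall q, 0 < eta q ->
    Num.min (S (sched t) q) (X t q) = S (sched t) q.
Proof.
apply: filter_forall => q; have [eta_q|_] := ltP 0 (eta q); last exact: nearW.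
have : \forall t \near \oo, forall n, S n q <= X t q.
  by apply: filter_forall => n; exact: near_ge_of_linear_growth _ eta_q (eta_cvg q).
by apply: filterS => t SX _; rewrite min_l.
Qed.

End maxweight.

Theorem lemma9 (R : realType) (Q N : nat)
  (S : 'I_N.+1 -> 'I_Q -> R)            (* schedule set S_1..S_{N+1} *)
  (d : 'I_Q -> R)                        (* Delta = diag(d) *)
  (A : nat -> 'I_Q -> R) (Abar : 'I_Q -> R) (rho : 'I_Q -> R)
  (X : nat -> 'I_Q -> R) (sched : nat -> 'I_N.+1) (eta : 'I_Q -> R) :
  (forall n q, 0 <= S n q) ->
  (forall q, 0 < d q) ->
  (forall t q, 0 <= A t q <= Abar q) ->
  (forall q, 0 < rho q) ->
  (forall q, (fun t : nat => (\sum_(s < t) A s q) / t%:R) @ \oo --> rho q) ->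
  (forall q, X 0%N q = 0) ->
  (forall t q, X t.+1 q = X t q + A t q - Num.min (S (sched t) q) (X t q)) ->
  (forall t n, ipD d (S n) (X t) <= ipD d (S (sched t)) (X t)) ->
  ~ in_stab_region S rho ->
  (forall q, (fun t : nat => X t q / t%:R) @ \oo --> eta q) ->
  ipD d eta eta = ipD d rho eta - maxSD S d eta.
Proof.
move=> _ _ A_bnd _ rho_cvg X0 Xrec maxweight _ eta_cvg.
pose D t q := Num.min (S (sched t) q) (X t q).
have A_ge0 t q : 0 <= A t q by case/andP: (A_bnd t q).
have eta_ge0 q : 0 <= eta q.
  apply: lim_ge0 (eta_cvg q) => t.
  by rewrite divr_ge0 // (queue_ge0 X0 A_ge0 Xrec).
have full_service : \forall t \near \oo, ipD d (D t) eta = ipD d (S (sched t)) eta.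
  apply: filterS (near_full_service S sched eta_cvg) => t served.
  apply: eq_ipD_support => q eta_q.
  by rewrite /D served // lt_def eta_q eta_ge0.
have weight_near : \forall t \near \oo, ipD d (D t) eta = maxSD S d eta.
  apply: filterS2 (near_maxweight_maxSD S sched eta_cvg maxweight) full_service.
  by move=> t -> ->.
have mean_max := cvg_mean (cvg_near_cst _ (FF := eventually_filter) weight_near).
have mean_balance : (fun t : nat => (\sum_(s < t) ipD d (D s) eta) / t%:R)
    @ \oo --> ipD d rho eta - ipD d eta eta.
  rewrite -ipDBl; under eq_fun do rewrite ipD_suml_divr.
  apply: cvg_ipD => q; last exact: cvg_cst.
  under eq_fun do rewrite (sum_departures X0 Xrec) mulrBl.
  exact: cvgB.
rewrite -(cvg_lim _ mean_max) // (cvg_lim _ mean_balance) //.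
by rewrite opprB addrC subrK.
Qed.
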